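(* Let $w$ be a primitive word over a totally ordered alphabet with a special factorization $w=a_1\pi_1a_2\pi_2\cdots\pi_{k-1}a_k$, and suppose $w$ is conjugate to $W=a_k\pi_{k-1}a_{k-1}\cdots\pi_1a_1$. Let $w'$ and $w''$ be two consecutive rows of the Burrows–Wheeler matrix of $w$, with $w'$ immediately preceding $w''$ (so $w''$ is the lexicographically next conjugate after $w'$). Then there exist $i\in\{1,\dots,k-1\}$ and a factorization $\pi_i=uv$ such that $$w'=v\,a_i\pi_{i-1}a_{i-1}\cdots\pi_1a_1\,a_k\pi_{k-1}a_{k-1}\cdots\pi_{i+1}a_{i+1}\,u$$ and $$w''=v\,a_{i+1}\pi_{i+1}a_{i+2}\cdots\pi_{k-1}a_k\,a_1\pi_1a_2\cdots\pi_{i-1}a_i\,u.$$ Moreover, $w$ is the lexicographically smallest and $W$ the lexicographically largest element of their (common) conjugation class.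
   Context: A special factorization of $w$ is a factorization $w=a_1\pi_1a_2\cdots\pi_{k-1}a_k$ where the set of letters occurring in $w$ is $\{a_1<a_2<\cdots<a_k\}$ and $\pi_1,\dots,\pi_{k-1}$ are arbitrary words. Two words are conjugate if they are of the form $xy$ and $yx$. Words are compared in lexicographic order (a proper prefix is smaller). The Burrows–Wheeler matrix of a primitive word $w$ is the matrix whose rows are the distinct conjugates of $w$, listed in increasing lexicographic order, each row consisting of the letters of the corresponding conjugate. *)

From mathcomp Require Import all_boot all_order.
Set Implicit Arguments. Unset Strict Implicit. Unset Printing Implicit Defensive.
Import Order.TTheory.

Section Words.
Context {d : Order.disp_t} {T : orderType d}.

Fixpoint lexlt (s t : seq T) : bool :=
  match s, t with
  | _, [::] => false
  | [::], _ :: _ => true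
  | x :: s', y :: t' => ((x < y)%O) || ((x == y) && lexlt s' t')
  end.

Definition lexle (s t : seq T) : bool := (s == t) || lexlt s t.

Definition primitive (w : seq T) : Prop :=
  0 < size w /\ forall (u : seq T) (n : nat), 1 < n -> w <> flatten (nseq n u).

Definition conjugate (x y : seq T) : Prop :=
  exists p q : seq T, x = p ++ q /\ y = q ++ p.

(* Burrows-Wheeler matrix: distinct conjugates (rotations) of w, sorted
   increasingly for the lexicographic order; rows listed top to bottom *)
Definition bwm (w : seq T) : seq (seq T) :=
  sort lexle (undup [seq rot n w | n <- iota 0 (size w)]).

(* forward segment  a_j pi_j a_(j+1) ... pi_(l-1) a_l  (j <= l) *)
Definition fseg (a : nat -> T) (pi : nat -> seq T) (j l : nat) : seq T :=
  a j :: flatten [seq pi m ++ [:: a m.+1] | m <- iota j (l - j)].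

(* backward segment  a_l pi_(l-1) a_(l-1) ... pi_j a_j  (j <= l) *)
Definition bseg (a : nat -> T) (pi : nat -> seq T) (l j : nat) : seq T :=
  a l :: flatten [seq pi m ++ [:: a m] | m <- rev (iota j (l - j))].

Definition special_fact (w : seq T) (k : nat) (a : nat -> T) (pi : nat -> seq T)
  : Prop :=
  [/\ (forall i j, 1 <= i -> i < j -> j <= k -> (a i < a j)%O),
      (forall x, x \in w <-> exists2 i, 1 <= i <= k & x = a i)
    & w = fseg a pi 1 k].

End Words.

(* Cutting the factor pi_i of w and of W at the same place, pi_i = u v, yields a rotation
   x = v a_i pi_(i-1) ... a_1 a_k ... a_(i+1) u of W and a rotation
   y = v a_(i+1) ... a_k a_1 ... a_i u of w, and x < y because they first differ at
   a_i < a_(i+1). Every rotation of W other than W is such an x, and since w is primitive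
   the rotation y determines the cut, hence x. In a sorted list, if every row but one has a
   larger partner and the partner determines the row, then each partner is the next row:
   hence the exceptional row W is the last row, and w, which is nobody's partner, the first. *)

From mathcomp Require Import all_boot all_order zify.
Import Order.TTheory.
Set Implicit Arguments. Unset Strict Implicit. Unset Printing Implicit Defensive.

Section Lexicographic.
Context {disp : Order.disp_t} {T : orderType disp}.
Implicit Types s t v : seq T.

Lemma lexltE s t : lexlt s t = (s < t :> seqlexi T)%O.
Proof. by elim: s t => [|x s IH] [|y t] //=; rewrite ltxi_cons IH; case: ltgtP. Qed.

Lemma lexleE s t : lexle s t = (s <= t :> seqlexi T)%O.
Proof. by rewrite /lexle lexltE le_eqVlt. Qed.

Lemma lexlt_cat v s t : lexlt (v ++ s) (v ++ t) = lexlt s t.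
Proof. by elim: v => //= x v ->; rewrite ltxx eqxx. Qed.

End Lexicographic.

Section Commuting.
Variable T : Type.
Implicit Types x y : seq T.

Lemma cat_overlap x1 x2 y1 y2 : x1 ++ x2 = y1 ++ y2 ->
  (exists r, y1 = x1 ++ r /\ x2 = r ++ y2) \/
  (exists z r, x1 = y1 ++ z :: r /\ y2 = z :: r ++ x2).
Proof.
elim: x1 y1 => [|z x1 IH] [|t y1] /=.
- by move=> ->; left; exists [::].
- by move=> ->; left; exists (t :: y1).
- by move=> <-; right; exists z, x1.
- case=> <- /IH [[r [-> ->]] | [z' [r [-> ->]]]]; first by left; exists r.
  by right; exists z', r.
Qed.

Lemma cat_commute_pow x y : x ++ y = y ++ x ->
  exists z m n, x = flatten (nseq m z) /\ y = flatten (nseq n z).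
Proof.
have [N] := ubnP (size x + size y); elim: N x y => // N IH x y.
wlog le_xy : x y / size x <= size y => [hwlog|] ltN xy.
  have [le_xy|/ltnW le_yx] := leqP (size x) (size y); first exact: hwlog.
  rewrite addnC in ltN.
  have [z [m [n [-> ->]]]] := hwlog y x le_yx ltN (esym xy).
  by exists z, n, m.
have [/size0nil ->|x0] := posnP (size x); first by exists y, 0, 1; rewrite /= cats0.
have take_y : take (size x) y = x by rewrite -(takel_cat x le_xy) -xy take_size_cat.
have y_def : y = x ++ drop (size x) y by rewrite -{1}(cat_take_drop (size x) y) take_y.
have comm : x ++ drop (size x) y = drop (size x) y ++ x.
  by move: xy; rewrite y_def -catA => /(congr1 (drop (size x))); rewrite !drop_size_cat.
have [|z [m [n [xm yn]]]] := IH _ _ _ comm.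
  by rewrite size_drop; lia.
by exists z, m, (m + n); rewrite y_def {2}xm yn nseqD flatten_cat.
Qed.

End Commuting.

Section Conjugacy.
Context {disp : Order.disp_t} {T : orderType disp}.
Implicit Types w x y z : seq T.

Lemma conjugate_rot w m : conjugate w (rot m w).
Proof. by exists (take m w), (drop m w); rewrite cat_take_drop. Qed.

Lemma conjugateP x y : conjugate x y <-> exists m, y = rot m x.
Proof.
split=> [[p [q [-> ->]]] | [m ->]]; last exact: conjugate_rot.
by exists (size p); rewrite rot_size_cat.
Qed.

Lemma conjugate_sym x y : conjugate x y -> conjugate y x.
Proof. by case=> p [q [-> ->]]; exists q, p. Qed.

Lemma conjugate_trans x y z : conjugate x y -> conjugate y z -> conjugate x z.
Proof.
by move=> /conjugateP[m ->] /conjugateP[n ->]; rewrite rot_rot_add; apply: conjugate_rot.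
Qed.

Lemma primitive_rot_eq w q : primitive w -> q < size w -> rot q w = w -> q = 0.
Proof.
move=> [_ prim] lt_qw; rewrite /rot => rot_w; apply/eqP; apply: contraT; rewrite -lt0n => q0.
have [z [m [n [wl wr]]]] := cat_commute_pow (etrans (cat_take_drop q w) (esym rot_w)).
have m0 : 0 < m by case: m wl => // /(congr1 size); rewrite size_take lt_qw /=; lia.
have n0 : 0 < n by case: n wr => // /(congr1 size); rewrite size_drop /=; lia.
have w_pow : w = flatten (nseq (m + n) z) by rewrite nseqD flatten_cat -wl -wr cat_take_drop.
by case: (prim z (m + n) ltac:(lia) w_pow).
Qed.

Lemma primitive_rot_inj w : primitive w -> {in gtn (size w) &, injective (rot^~ w)}.
Proof.
move=> prim q q' lt_q lt_q' eq_rot.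
wlog le_qq' : q q' lt_q lt_q' eq_rot / q <= q' => [hwlog|].
  case/orP: (leq_total q q') => [le_qq'|le_q'q]; first exact: hwlog.
  exact/esym/(hwlog q' q lt_q' lt_q (esym eq_rot)).
have rot_w : rot (q' - q) w = w.
  by apply: (rot_inj (n0 := q)); rewrite -rotD subnKC // ltnW.
by move: (primitive_rot_eq prim (leq_ltn_trans (leq_subr _ _) lt_q') rot_w); lia.
Qed.

Lemma mem_bwm w z : 0 < size w -> z \in bwm w <-> conjugate w z.
Proof.
move=> w0; rewrite mem_sort mem_undup conjugateP.
split=> [/mapP[m _ ->] | [m ->]]; first by exists m.
apply/mapP; have [lt_m|le_m] := ltnP m (size w).
  by exists m; rewrite // mem_iota.
by exists 0; rewrite ?mem_iota ?rot0 ?rot_oversize.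
Qed.

Lemma bwm_sorted w : sorted <%O (bwm w : seq (seqlexi T)).
Proof.
have lexle_total : total (@lexle _ T) by move=> s t; rewrite !lexleE le_total.
rewrite lt_sorted_uniq_le sort_uniq undup_uniq -(eq_sorted lexleE).
exact: sort_sorted.
Qed.

End Conjugacy.

Section SortedSteps.
Context {disp : Order.disp_t} {U : porderType disp}.
Variables (x0 top bot : U) (s : seq U) (step : U -> U -> Prop).
Hypothesis s_sorted : sorted <%O s.

Lemma sorted_nth_bounds z : z \in s -> (nth x0 s 0 <= z <= nth x0 s (size s).-1)%O.
Proof.
move=> zs; have s0 : 0 < size s by case: (s) zs.
rewrite -(nth_index x0 zs) !(lt_sorted_leq_nth x0 s_sorted) ?inE ?index_mem ?ltn_predL //.
by rewrite leq0n -ltnS prednK // index_mem.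
Qed.

Hypotheses (step_lt : forall x y, step x y -> (x < y)%O)
  (step_mem : forall x y, step x y -> y \in s)
  (step_inj : forall x x' y, step x y -> step x' y -> x = x')
  (step_total : forall x, x \in s -> x != top -> exists y, step x y).

Lemma step_index x y : x \in s -> step x y -> index x s < index y s.
Proof.
move=> xs /[dup] /step_mem ys /step_lt.
rewrite -{1}(nth_index x0 xs) -{1}(nth_index x0 ys).
by rewrite (lt_sorted_ltn_nth x0 s_sorted) ?inE ?index_mem.
Qed.

Lemma sorted_step_last : 0 < size s -> nth x0 s (size s).-1 = top.
Proof.
move=> s0; have last_s : nth x0 s (size s).-1 \in s by rewrite mem_nth ?prednK.
apply/eqP; apply: contraT => /(step_total last_s) [y step_y].
have := step_index last_s step_y; rewrite index_uniq ?prednK ?(lt_sorted_uniq s_sorted) //.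
by move: (step_mem step_y); rewrite -index_mem => lt_y; rewrite leqNgt lt_y.
Qed.

Lemma sorted_step_nth j : j.+1 < size s -> step (nth x0 s j) (nth x0 s j.+1).
Proof.
have s_uniq := lt_sorted_uniq s_sorted.
have [t] := ubnP (size s - j); elim: t j => // t IH j lt_t lt_j.
have lt_j' : j < size s := ltnW lt_j.
have sj : nth x0 s j \in s by rewrite mem_nth.
have sj_top : nth x0 s j != top.
  have s0 : 0 < size s by move: lt_j; case: (size s).
  rewrite -(sorted_step_last s0) nth_uniq ?ltn_predL //.
  by rewrite ltn_eqF // ltn_predRL.
have [y step_y] := step_total sj sj_top.
have := step_index sj step_y; rewrite index_uniq // => lt_jy.
have ys := step_mem step_y.
have lt_y : index y s < size s by rewrite index_mem.
have [lt_Sy|gt_Sy|->] := ltngtP j.+1 (index y s); last by rewrite nth_index.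
- have := IH (index y s).-1 ltac:(lia) ltac:(lia).
  have y0 : 0 < index y s by lia.
  rewrite prednK // nth_index // => /(step_inj step_y) /eqP.
  rewrite nth_uniq // ?(leq_ltn_trans (leq_pred _) lt_y) //.
  by move/eqP=> j_eq; exfalso; lia.
- by exfalso; lia.
Qed.

Hypotheses (bot_mem : bot \in s) (step_neq_bot : forall x y, step x y -> y != bot).

Lemma sorted_step_head : nth x0 s 0 = bot.
Proof.
have [|i_bot] := posnP (index bot s); first by move <-; rewrite nth_index.
have := @sorted_step_nth (index bot s).-1; rewrite prednK // nth_index // index_mem.
by move=> /(_ bot_mem) /step_neq_bot; rewrite eqxx.
Qed.

End SortedSteps.

Section Segments.
Context {disp : Order.disp_t} {T : orderType disp}.
Variables (a : nat -> T) (pi : nat -> seq T).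

Lemma fseg_split j m l : j <= m < l ->
  fseg a pi j l = fseg a pi j m ++ pi m ++ fseg a pi m.+1 l.
Proof.
move=> /andP[jm ml]; rewrite /fseg.
have -> : l - j = (m - j) + (l - m.+1).+1 by lia.
by rewrite iotaD subnKC //= map_cat flatten_cat /= -!catA.
Qed.

Lemma bseg_split j m l : j <= m < l ->
  bseg a pi l j = bseg a pi l m.+1 ++ pi m ++ bseg a pi m j.
Proof.
move=> /andP[jm ml]; rewrite /bseg.
have -> : l - j = (m - j) + (l - m.+1).+1 by lia.
by rewrite iotaD subnKC //= rev_cat rev_cons -cats1 !map_cat !flatten_cat /= -!catA ?cats0.
Qed.

Lemma bseg_small l j : l <= j -> bseg a pi l j = [:: a l].
Proof. by rewrite /bseg -subn_eq0 => /eqP ->. Qed.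

Lemma bseg_cut k A B : bseg a pi k 1 = A ++ B -> A != [::] -> B != [::] ->
  exists2 i, 0 < i < k & exists u v,
    [/\ pi i = u ++ v, A = bseg a pi k i.+1 ++ u & B = v ++ bseg a pi i 1].
Proof.
have unsplit x s t : [:: x] = s ++ t -> s != [::] -> t != [::] -> False.
  by case: s => [|y [|]] //= [_ <-].
elim: k A B => [|k IH] A B; first by rewrite bseg_small // => /unsplit/[apply]/[apply].
have [->|k0] := posnP k; first by rewrite bseg_small // => /unsplit/[apply]/[apply].
rewrite (bseg_split (m := k)) ?k0 ?ltnSn // (bseg_small (leqnn k.+1)).
case: A => [|z A] // [<-] /esym /cat_overlap [[v [pi_k ->]] | [x [r [-> bseg_k]]]] _ B0.
  by exists k; [rewrite k0 ltnSn | exists A, v; rewrite (bseg_small (leqnn k.+1))].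
have [i /andP[i0 ik] [u [v [pi_i xr_eq ->]]]] := IH (x :: r) B bseg_k isT B0.
exists i; first by rewrite i0 ltnS ltnW.
exists u, v; rewrite xr_eq (bseg_split (m := k) (l := k.+1)) ?ik ?ltnSn //.
by rewrite (bseg_small (leqnn k.+1)) -!catA.
Qed.

Lemma fseg_cut k i u v : 0 < i < k -> pi i = u ++ v ->
  fseg a pi 1 k = (fseg a pi 1 i ++ u) ++ (v ++ fseg a pi i.+1 k).
Proof. by move=> ik pi_i; rewrite (fseg_split (m := i) (l := k)) // pi_i -!catA. Qed.

Lemma fseg_cut_inj i i' u u' v v' : 0 < i -> 0 < i' ->
  pi i = u ++ v -> pi i' = u' ++ v' ->
  size (fseg a pi 1 i ++ u) = size (fseg a pi 1 i' ++ u') -> [/\ i = i', u = u' & v = v'].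
Proof.
have grow m m' r : 0 < m < m' -> size r <= size (pi m) ->
    size (fseg a pi 1 m ++ r) < size (fseg a pi 1 m').
  by move=> mm' le_r; rewrite (fseg_split (m := m) (l := m')) // !size_cat /fseg /=; lia.
move=> i0 i0' pi_i pi_i' eq_size.
have le_u : size u <= size (pi i) by rewrite pi_i size_cat leq_addr.
have le_u' : size u' <= size (pi i') by rewrite pi_i' size_cat leq_addr.
have [lt_i|lt_i|eq_i] := ltngtP i i'.
- by have := grow _ _ _ (introT andP (conj i0 lt_i)) le_u; rewrite eq_size size_cat; lia.
- by have := grow _ _ _ (introT andP (conj i0' lt_i)) le_u'; rewrite -eq_size size_cat; lia.
subst i'; move: eq_size; rewrite !size_cat => /addnI eq_u.
by move/eqP: pi_i'; rewrite pi_i eqseq_cat // => /andP[/eqP-> /eqP->].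
Qed.

End Segments.

Section CutPairs.
Context {disp : Order.disp_t} {T : orderType disp}.
Variables (a : nat -> T) (pi : nat -> seq T) (k : nat).

Definition cut_pair (x y : seq T) : Prop :=
  exists2 i, 0 < i < k & exists u v, [/\ pi i = u ++ v,
    x = v ++ bseg a pi i 1 ++ bseg a pi k i.+1 ++ u &
    y = v ++ fseg a pi i.+1 k ++ fseg a pi 1 i ++ u].

Lemma cut_pair_lexlt x y : (forall i, 0 < i < k -> (a i < a i.+1)%O) ->
  cut_pair x y -> lexlt x y.
Proof. by move=> a_incr [i ik [u [v [_ -> ->]]]]; rewrite lexlt_cat /= a_incr. Qed.

Lemma rot_fseg_cut i u v : 0 < i < k -> pi i = u ++ v ->
  rot (size (fseg a pi 1 i ++ u)) (fseg a pi 1 k) = v ++ fseg a pi i.+1 k ++ fseg a pi 1 i ++ u.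
Proof. by move=> ik pi_i; rewrite (fseg_cut a ik pi_i) rot_size_cat -!catA. Qed.

Lemma size_fseg_cut i u v : 0 < i < k -> pi i = u ++ v ->
  0 < size (fseg a pi 1 i ++ u) < size (fseg a pi 1 k).
Proof. by move=> ik pi_i; rewrite (fseg_cut a ik pi_i) !size_cat /fseg /=; lia. Qed.

Lemma cut_pair_conjugate x y : cut_pair x y -> conjugate (fseg a pi 1 k) y.
Proof.
by case=> i ik [u [v [pi_i _ ->]]]; rewrite -(rot_fseg_cut ik pi_i); apply: conjugate_rot.
Qed.

Lemma cut_pair_neq x y : primitive (fseg a pi 1 k) -> cut_pair x y -> y != fseg a pi 1 k.
Proof.
move=> prim [i ik [u [v [pi_i _ ->]]]]; rewrite -(rot_fseg_cut ik pi_i).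
have /andP[cut0 cut_lt] := size_fseg_cut ik pi_i.
by apply/eqP => /(primitive_rot_eq prim cut_lt); lia.
Qed.

Lemma cut_pair_inj x x' y : primitive (fseg a pi 1 k) ->
  cut_pair x y -> cut_pair x' y -> x = x'.
Proof.
move=> prim [i ik [u [v [pi_i -> ->]]]] [i' ik' [u' [v' [pi_i' -> eq_y]]]].
move: eq_y; rewrite -(rot_fseg_cut ik pi_i) -(rot_fseg_cut ik' pi_i').
move/(primitive_rot_inj prim); rewrite !inE.
have /andP[_ ->] := size_fseg_cut ik pi_i; have /andP[_ ->] := size_fseg_cut ik' pi_i'.
case/andP: ik => i0 _; case/andP: ik' => i0' _.
by move=> /(_ isT isT) /(fseg_cut_inj i0 i0' pi_i pi_i') [<- <- <-].
Qed.

Lemma cut_pair_total x : conjugate (bseg a pi k 1) x -> x != bseg a pi k 1 ->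
  exists y, cut_pair x y.
Proof.
case=> A [B [W_AB ->]] neq_W.
have A0 : A != [::] by apply: contraNneq neq_W => A0; rewrite W_AB A0 cats0.
have B0 : B != [::] by apply: contraNneq neq_W => B0; rewrite W_AB B0 cats0.
have [i ik [u [v [pi_i -> ->]]]] := bseg_cut W_AB A0 B0.
by exists (v ++ fseg a pi i.+1 k ++ fseg a pi 1 i ++ u), i => //; exists u, v; rewrite -!catA.
Qed.

End CutPairs.

Theorem lemma4p5 (d : Order.disp_t) (T : orderType d) (w : seq T) (k : nat)
  (a : nat -> T) (pi : nat -> seq T) (j : nat) :
  primitive w ->
  special_fact w k a pi ->
  conjugate w (bseg a pi k 1) ->
  j.+1 < size (bwm w) ->
  let w' := nth [::] (bwm w) j in
  let w'' := nth [::] (bwm w) j.+1 in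
  (exists2 i, 1 <= i <= k.-1 &
     exists u v : seq T, pi i = u ++ v /\
       w' = v ++ bseg a pi i 1 ++ bseg a pi k i.+1 ++ u /\
       w'' = v ++ fseg a pi i.+1 k ++ fseg a pi 1 i ++ u) /\
  (forall z, conjugate w z -> lexle w z /\ lexle z (bseg a pi k 1)).
Proof.
move=> prim [a_lt _ w_def] conj_wW lt_j; cbv zeta.
have w0 : 0 < size w by case: prim.
have a_incr i : 0 < i < k -> (a i < a i.+1)%O by case/andP=> i0 ik; apply: a_lt.
have prim_f : primitive (fseg a pi 1 k) by rewrite -w_def.
have step_lt x y : cut_pair a pi k x y -> (x < y :> seqlexi T)%O.
  by rewrite -lexltE; apply: cut_pair_lexlt.
have step_mem x y : cut_pair a pi k x y -> y \in bwm w.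
  by move=> /cut_pair_conjugate; rewrite -w_def => /(mem_bwm _ w0).
have step_inj := cut_pair_inj prim_f.
have step_total x : x \in bwm w -> x != bseg a pi k 1 -> exists y, cut_pair a pi k x y.
  move=> /(mem_bwm _ w0) conj_wx; apply: cut_pair_total.
  exact: conjugate_trans (conjugate_sym conj_wW) conj_wx.
have step_neq x y : cut_pair a pi k x y -> y != w by rewrite w_def; apply: cut_pair_neq.
have w_mem : w \in bwm w by apply/(mem_bwm _ w0); exists [::], w; rewrite cats0.
have sorted_w := bwm_sorted w.
split.
  have [i /andP[i0 ik] [u [v [pi_i -> ->]]]] :=
    sorted_step_nth (nil : seqlexi T) sorted_w step_lt step_mem step_inj step_total lt_j.
  by exists i; [rewrite i0 /=; lia | exists u, v].
move=> z /(mem_bwm _ w0) z_mem; rewrite !lexleE.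
have s0 : 0 < size (bwm w) by lia.
have := sorted_nth_bounds (nil : seqlexi T) sorted_w z_mem.
rewrite (sorted_step_head _ sorted_w step_lt step_mem step_inj step_total w_mem step_neq).
by rewrite (sorted_step_last _ sorted_w step_lt step_mem step_total s0) => /andP.
Qed.
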